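(* Let $n\le l$ be positive integers, let $L_l=\{a_1<\dots<a_l\}$ be the linearly ordered semilattice of $l$ elements, and let $t(X)=s(X)$ be an equation over $L_l$ in the variables $X=\{x_1,\dots,x_n\}$ in which every variable occurs. Let $Y=V(t(X)=s(X))\subseteq L_l^n$ be its solution set. Then $Y=\bigcup_{\sigma} Y_\sigma$, where the union is over all permutations $\sigma$ of $\{1,\dots,n\}$ of the first or second kind with respect to $t(X)=s(X)$.
   Context: $L_l$ has multiplication $a_ia_j=a_{\min(i,j)}$. A term is a commutative word in $x_1,\dots,x_n$; $\mathrm{Var}(t)$ is the set of variables occurring in $t$. An equation is an ordered pair of terms $t(X)=s(X)$; $P\in L_l^n$ is a solution if $t(P)=s(P)$; $x\le y$ abbreviates $xy=x$. For a system $S$, $V(S)$ is its set of common solutions. A permutation $\sigma$ of $\{1,\dots,n\}$ is of the first kind if $x_{\sigma(1)}\in\mathrm{Var}(t)\cap\mathrm{Var}(s)$, and of the second kind if $x_{\sigma(1)}\in\mathrm{Var}(s)\setminus\mathrm{Var}(t)$ and $x_{\sigma(2)}\in\mathrm{Var}(t)\setminus\mathrm{Var}(s)$. For $\sigma$ of the first kind, $Y_\sigma=V(\{x_{\sigma(i)}\le x_{\sigma(i+1)}:1\le i\le n-1\})$; for $\sigma$ of the second kind, $Y_\sigma=V(\{x_{\sigma(1)}=x_{\sigma(2)}\}\cup\{x_{\sigma(i)}\le x_{\sigma(i+1)}:2\le i\le n-1\})$. *)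

From mathcomp Require Import all_boot.
From mathcomp Require Import fingroup perm.
Set Implicit Arguments. Unset Strict Implicit. Unset Printing Implicit Defensive.

(* The semilattice L_l = {a_1 < ... < a_l} is modelled by 'I_l (a_(k+1) <-> k),
   with multiplication a_i a_j = a_(min i j).  Points of L_l^n are functions
   'I_n -> 'I_l (variable x_(i+1) <-> i : 'I_n). *)

(* A commutative word in x_1..x_n : multiplicity of each variable. *)
Definition term (n : nat) := {ffun 'I_n -> nat}.

Definition is_term n (t : term n) : bool := [exists i, 0 < t i].

Definition Var n (t : term n) : {set 'I_n} := [set i | 0 < t i].

Definition tvar n (i : 'I_n) : term n := [ffun j => (j == i) : nat].
Definition tmul n (t s : term n) : term n := [ffun j => t j + s j].

(* value of a term at P in L_l (as the index of the element of L_l):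
   the product of the values of its letters, i.e. their minimum *)
Definition eval n l (t : term n) (P : 'I_n -> 'I_l) : nat :=
  \big[minn/l]_(i | 0 < t i) (P i : nat).

Definition equation n := (term n * term n)%type.

Definition solution n l (e : equation n) (P : 'I_n -> 'I_l) : Prop :=
  eval e.1 P = eval e.2 P.

Definition V n l (S : seq (equation n)) (P : 'I_n -> 'I_l) : Prop :=
  forall e, e \in S -> solution e P.
Arguments V {n} l S P.

(* x_i <= x_j abbreviates x_i x_j = x_i ;  x_i = x_j is the equation itself *)
Definition le_eq n (i j : 'I_n) : equation n := (tmul (tvar i) (tvar j), tvar i).
Definition eq_eq n (i j : 'I_n) : equation n := (tvar i, tvar j).

(* Below, positions 1..n of the paper are 0..n-1. *)

Definition first_kind n (t s : term n) (sg : {perm 'I_n}) : bool :=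
  [exists i : 'I_n, (val i == 0) && (sg i \in Var t) && (sg i \in Var s)].

Definition second_kind n (t s : term n) (sg : {perm 'I_n}) : bool :=
  [exists i : 'I_n, exists j : 'I_n,
     [&& val i == 0, val j == 1,
         sg i \in Var s :\: Var t & sg j \in Var t :\: Var s]].

(* {x_sg(i) <= x_sg(i+1) : k <= i <= n-1} (paper indexing, here 0-based k-1) *)
Definition chain n (k : nat) (sg : {perm 'I_n}) : seq (equation n) :=
  [seq le_eq (sg i) (sg j) | i <- enum 'I_n, j <- [seq j <- enum 'I_n | (k <= val i) && (val j == (val i).+1)]].

Definition Y1 n l (sg : {perm 'I_n}) : ('I_n -> 'I_l) -> Prop := V l (chain 0 sg).
Arguments Y1 {n} l sg P.

Definition Y2 n l (sg : {perm 'I_n}) : ('I_n -> 'I_l) -> Prop :=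
  V l ([seq eq_eq (sg i) (sg j) | i <- enum 'I_n, j <- [seq j <- enum 'I_n | (val i == 0) && (val j == 1)]]
       ++ chain 1 sg).
Arguments Y2 {n} l sg P.

From HB Require Import structures.
From mathcomp Require Import all_boot.
From mathcomp Require Import fingroup perm.

Set Implicit Arguments.
Unset Strict Implicit.
Unset Printing Implicit Defensive.

(* Since every variable occurs in t or in s, the common value of t and s at a
   solution P is the global minimum of P.  Either this minimum is attained at
   a variable common to t and s, and sorting the variables by their values
   with that variable first gives a permutation of the first kind; or it is
   attained only at a variable of s not in t and a variable of t not in s,
   and putting these two first gives one of the second kind.  Conversely the
   chain conditions of Y_sigma force the first variable(s) to carry the global
   minimum, which is then the value of both t and s. *)

Section Sorting.

Variables (n : nat) (Q : 'I_n -> nat).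

Lemma exists_sorting_perm : exists sg : 'S_n, {homo Q \o sg : i j / i <= j}.
Proof.
have /tuple_permP[sg def_s] :
    perm_eq (sort (relpre Q leq) (enum 'I_n)) (ord_tuple n).
  by rewrite perm_sort val_ord_tuple.
have sorted_sg : sorted (relpre Q leq) [seq sg k | k <- enum 'I_n].
  have -> : [seq sg k | k <- enum 'I_n] = sort (relpre Q leq) (enum 'I_n).
    by rewrite def_s /=; apply: eq_map => k; rewrite tnth_ord_tuple.
  by apply: sort_sorted => x y; apply: leq_total.
have sorted_Qsg : sorted leq [seq Q (sg k) | k <- enum 'I_n].
  by rewrite (map_comp Q sg) sorted_map.
have nth_Qsg (k : 'I_n) : nth 0 [seq Q (sg k) | k <- enum 'I_n] k = Q (sg k).
  by rewrite (nth_map k) ?size_enum_ord // nth_ord_enum.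
exists sg => i j le_ij; rewrite /= -!nth_Qsg.
by apply: (sorted_leq_nth leq_trans leqnn) => //; rewrite inE size_map size_enum_ord.
Qed.

(* Exchanging positions [k] and [sg^-1 x] keeps the sequence of values, since
   sortedness squeezes [Q x] between [Q (sg k)] and itself. *)
Lemma sorting_perm_move (sg : 'S_n) (k : 'I_n) x :
    {homo Q \o sg : i j / i <= j} -> k <= (sg^-1)%g x -> Q x <= Q (sg k) ->
  exists sg' : 'S_n, [/\ {homo Q \o sg' : i j / i <= j}, sg' k = x &
                        forall j : 'I_n, j < k -> sg' j = sg j].
Proof.
move=> sorted_sg le_k_x le_x_k; set p := (sg^-1)%g x.
have Q_pk : Q (sg p) = Q (sg k).
  apply/eqP; rewrite eqn_leq permKV le_x_k -{1}(permKV sg x).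
  exact: sorted_sg.
have same_values : Q \o ((tperm k p * sg)%g) =1 Q \o sg.
  by move=> j /=; rewrite permM; case: tpermP => [->|->|] //; rewrite Q_pk.
exists ((tperm k p * sg)%g); split.
- by move=> i j le_ij; rewrite !same_values; apply: sorted_sg.
- by rewrite permM tpermL permKV.
- move=> j lt_jk; rewrite permM tpermD // neq_ltn ?lt_jk ?orbT //.
  by rewrite (leq_trans lt_jk le_k_x) orbT.
Qed.

Lemma exists_sorting_perm_from (a b : 'I_n) :
    (forall j, Q a <= Q j) -> Q b = Q a ->
  exists sg : 'S_n, [/\ {homo Q \o sg : i j / i <= j}, (sg^-1)%g a = 0 :> nat &
                        a != b -> (sg^-1)%g b = 1 :> nat].
Proof.
move=> a_min Qb.
have [sg0 sorted_sg0] := exists_sorting_perm.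
pose k0 : 'I_n := Ordinal (leq_ltn_trans (leq0n a) (ltn_ord a)).
have [sg1 [sorted_sg1 sg1_k0 _]] :=
  @sorting_perm_move sg0 k0 a sorted_sg0 (leq0n _) (a_min _).
have sg1V_a : (sg1^-1)%g a = k0 by rewrite -sg1_k0 permK.
have [<-|neq_ab] := eqVneq a b; first by exists sg1; rewrite sg1V_a.
have pos_b : 0 < (sg1^-1)%g b.
  rewrite lt0n; apply: contra_neq neq_ab => pos_b0.
  by rewrite -sg1_k0 -(permKV sg1 b); congr (sg1 _); apply: val_inj.
pose k1 : 'I_n := Ordinal (leq_ltn_trans pos_b (ltn_ord _)).
have Qb_le : Q b <= Q (sg1 k1) by rewrite Qb a_min.
have [sg2 [sorted_sg2 sg2_k1 sg2_k0]] :=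
  @sorting_perm_move sg1 k1 b sorted_sg1 pos_b Qb_le.
exists sg2; split=> // [|_]; last by rewrite -sg2_k1 permK.
by rewrite -[a]sg1_k0 -sg2_k0 // permK.
Qed.

End Sorting.

(* [minn] has no unit in [nat], but as a commutative semigroup law it
   gives access to [big_rem_AC]. *)
HB.instance Definition _ := SemiGroup.isComLaw.Build nat minn minnA minnC.

Section Evaluation.

Variables (n l : nat) (P : 'I_n -> 'I_l).

Lemma eval_le (t : term n) x : x \in Var t -> eval t P <= P x.
Proof.
rewrite inE => tx; rewrite /eval (big_rem_AC _ _ _ _ (mem_index_enum x)) tx.
exact: geq_minl.
Qed.

Lemma eval_min (t : term n) x :
  x \in Var t -> (forall y, y \in Var t -> P x <= P y) -> eval t P = P x.
Proof.
move=> tx x_min; apply/eqP; rewrite eqn_leq eval_le //=.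
apply: (big_ind (fun v => P x <= v)) => [|u v|y ty]; first exact: ltnW.
  by rewrite leq_min => -> ->.
by apply: x_min; rewrite inE.
Qed.

Lemma eval_attained (t : term n) :
  is_term t -> exists2 x, x \in Var t & eval t P = P x.
Proof.
case/existsP=> y ty.
case: (@arg_minnP _ y (fun i => 0 < t i) (fun i => (P i : nat)) ty) => x tx x_min.
exists x; rewrite ?inE //; apply: eval_min; rewrite ?inE // => z.
by rewrite inE; apply: x_min.
Qed.

Lemma Var_tvar (i j : 'I_n) : (j \in Var (tvar i)) = (j == i).
Proof. by rewrite inE ffunE; case: (j == i). Qed.

Lemma Var_tmul (t s : term n) j :
  (j \in Var (tmul t s)) = (j \in Var t) || (j \in Var s).
Proof. by rewrite !inE ffunE addn_gt0. Qed.

Lemma eval_tvar i : eval (tvar i) P = P i.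
Proof. by apply: eval_min; rewrite ?Var_tvar // => y; rewrite Var_tvar => /eqP->. Qed.

Lemma eval_tmul_tvar i j : eval (tmul (tvar i) (tvar j)) P = minn (P i) (P j).
Proof.
have Var_ij y : y \in Var (tmul (tvar i) (tvar j)) = (y == i) || (y == j).
  by rewrite Var_tmul !Var_tvar.
have [le_ij|lt_ji] := leqP (P i) (P j).
  apply: eval_min; rewrite ?Var_ij ?eqxx // => y.
  by rewrite Var_ij => /orP[]/eqP->.
apply: eval_min; rewrite ?Var_ij ?eqxx ?orbT //.
by move=> y; rewrite Var_ij => /orP[]/eqP-> //; apply: ltnW.
Qed.

Lemma solution_le_eq i j : solution (le_eq i j) P <-> P i <= P j.
Proof. by rewrite /solution /= eval_tmul_tvar eval_tvar; split=> /minn_idPl. Qed.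

Lemma solution_at_common_min (t s : term n) x y :
    x \in Var t -> y \in Var s -> P x = P y :> nat -> (forall z, P x <= P z) ->
  solution (t, s) P.
Proof.
move=> tx sy Pxy x_min; rewrite /solution /= (@eval_min t x tx) //.
by rewrite (@eval_min s y sy) // => z _; rewrite -Pxy.
Qed.

End Evaluation.

Lemma ord_succ_homo n (F : 'I_n -> nat) k :
    (forall i j : 'I_n, k <= i -> j = i.+1 :> nat -> F i <= F j) ->
  forall i j : 'I_n, k <= i <= j -> F i <= F j.
Proof.
move=> F_succ i j /andP[le_ki le_ij].
suff F_from_i m (j' : 'I_n) : j' = i + m :> nat -> F i <= F j'.
  by apply: (F_from_i (j - i)); rewrite subnKC.
elim: m j' => [|m IHm] j' def_j'.
  by rewrite (_ : j' = i) //; apply: ord_inj; rewrite def_j' addn0.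
have lt_im_n : i + m < n by rewrite -addnS -def_j' ltnW.
apply: leq_trans (IHm (Ordinal lt_im_n) erefl) (F_succ _ _ _ _) => /=.
  exact: leq_trans le_ki (leq_addr m i).
by rewrite def_j' addnS.
Qed.

Section Systems.

Variables (n l : nat) (P : 'I_n -> 'I_l).

Lemma V_seq1 (e : equation n) : V l [:: e] P <-> solution e P.
Proof. by split=> [|sol_e f]; [apply; rewrite mem_head | rewrite inE => /eqP->]. Qed.

Lemma V_cat (S1 S2 : seq (equation n)) :
  V l (S1 ++ S2) P <-> V l S1 P /\ V l S2 P.
Proof.
split=> [VS|[VS1 VS2] e]; last by rewrite mem_cat => /orP[/VS1|/VS2].
by split=> e Se; apply: VS; rewrite mem_cat Se ?orbT.
Qed.

Lemma V_chainP k (sg : 'S_n) :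
  V l (chain k sg) P <-> forall i j : 'I_n, k <= i <= j -> P (sg i) <= P (sg j).
Proof.
split=> [V_chain | sorted_sg e].
  apply: (@ord_succ_homo n (fun i => P (sg i)) k) => i j le_ki def_j.
  apply/solution_le_eq/V_chain/allpairsPdep; exists i, j.
  by rewrite mem_enum mem_filter mem_enum le_ki /= def_j eqxx.
case/allpairsPdep=> i [j [_ + ->]].
rewrite mem_filter => /andP[/andP[le_ki /eqP def_j] _].
by apply/solution_le_eq/sorted_sg; rewrite le_ki def_j leqnSn.
Qed.

Lemma Y2P (sg : 'S_n) :
  Y2 l sg P <->
    (forall i j : 'I_n, i = 0 :> nat -> j = 1 :> nat -> P (sg i) = P (sg j) :> nat) /\
    (forall i j : 'I_n, 1 <= i <= j -> P (sg i) <= P (sg j)).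
Proof.
split=> [/V_cat[V_eq /V_chainP sorted_sg] | [eq01 sorted_sg]].
  split=> // i j i0 j1; have := V_eq (eq_eq (sg i) (sg j)).
  rewrite /solution /= !eval_tvar; apply.
  by apply/allpairsPdep; exists i, j; rewrite mem_enum mem_filter mem_enum i0 j1.
apply/V_cat; split=> [e|]; last exact/V_chainP.
case/allpairsPdep=> i [j [_ + ->]].
rewrite mem_filter => /andP[/andP[/eqP i0 /eqP j1] _].
by rewrite /solution /= !eval_tvar; apply: eq01.
Qed.

End Systems.

Section Kinds.

Variables (n l : nat) (P : 'I_n -> 'I_l) (t s : term n).

Lemma first_kind_solution (sg : 'S_n) :
  first_kind t s sg -> Y1 l sg P -> solution (t, s) P.
Proof.
case/existsP=> i /andP[/andP[/eqP i0 ti] si] /V_chainP sorted_sg.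
apply: (solution_at_common_min ti si erefl) => z.
by rewrite -(permKV sg z); apply: sorted_sg; rewrite i0.
Qed.

Lemma second_kind_solution (sg : 'S_n) :
  second_kind t s sg -> Y2 l sg P -> solution (t, s) P.
Proof.
case/existsP=> i /existsP[j /and4P[/eqP i0 /eqP j1 /setDP[si _] /setDP[tj _]]].
case/Y2P=> eq01 sorted_sg; have Pij := eq01 i j i0 j1.
apply: (solution_at_common_min tj si (esym Pij)) => z.
rewrite -(permKV sg z); have [z0|z_gt0] := posnP ((sg^-1)%g z).
  by rewrite -Pij (_ : (sg^-1)%g z = i) //; apply: ord_inj; rewrite z0 i0.
by apply: sorted_sg; rewrite j1 z_gt0.
Qed.

Lemma first_kind_at_min c :
    c \in Var t -> c \in Var s -> (forall j, P c <= P j) ->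
  exists sg : 'S_n, first_kind t s sg /\ Y1 l sg P.
Proof.
move=> tc sc c_min.
have [sg [sorted_sg sgV_c _]] :=
  @exists_sorting_perm_from n (fun i => P i : nat) c c c_min erefl.
exists sg; split; last by apply/V_chainP => i j /andP[_]; apply: sorted_sg.
by apply/existsP; exists ((sg^-1)%g c); rewrite permKV /= sgV_c tc sc.
Qed.

Lemma second_kind_at_min a b :
    a \in Var s :\: Var t -> b \in Var t :\: Var s -> P a = P b :> nat ->
    (forall j, P a <= P j) ->
  exists sg : 'S_n, second_kind t s sg /\ Y2 l sg P.
Proof.
move=> a_sDt b_tDs Pab a_min; have /setDP[tb _] := b_tDs.
have neq_ab : a != b by apply: contraTneq a_sDt => ->; rewrite in_setD tb.
have [sg [sorted_sg sgV_a /(_ neq_ab) sgV_b]] :=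
  @exists_sorting_perm_from n (fun i => P i : nat) a b a_min (esym Pab).
exists sg; split.
  apply/existsP; exists ((sg^-1)%g a); apply/existsP; exists ((sg^-1)%g b).
  by rewrite /= sgV_a sgV_b !permKV a_sDt b_tDs.
apply/Y2P; split=> [i j i0 j1|i j /andP[_]]; last exact: sorted_sg.
have -> : i = (sg^-1)%g a by apply: ord_inj; rewrite i0 sgV_a.
have -> : j = (sg^-1)%g b by apply: ord_inj; rewrite j1 sgV_b.
by rewrite !permKV.
Qed.

Lemma solution_sorting_perm :
    is_term t -> is_term s -> (forall i, i \in Var t :|: Var s) ->
    solution (t, s) P ->
  exists sg : 'S_n,
    (first_kind t s sg /\ Y1 l sg P) \/ (second_kind t s sg /\ Y2 l sg P).
Proof.
move=> ht hs hall sol.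
have [xt txt Pxt] := eval_attained P ht; have [xs sxs Pxs] := eval_attained P hs.
have eval_t_min j : eval t P <= P j.
  by case/setUP: (hall j) => /(eval_le P); rewrite sol.
case: (pickP [pred c | [&& c \in Var t, c \in Var s & P c == eval t P :> nat]]).
  move=> c /and3P[tc sc /eqP Pc].
  have c_min j : P c <= P j by rewrite Pc eval_t_min.
  by have [sg ?] := first_kind_at_min tc sc c_min; exists sg; left.
move=> no_common.
have ntxs : xs \notin Var t.
  by apply: contraFN (no_common xs) => txs; rewrite /= txs sxs sol Pxs eqxx.
have nsxt : xt \notin Var s.
  by apply: contraFN (no_common xt) => sxt; rewrite /= txt sxt Pxt eqxx.
have Pxs_xt : P xs = P xt :> nat by rewrite -Pxs -Pxt sol.
have xs_min j : P xs <= P j by rewrite -Pxs -sol eval_t_min.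
have xs_st : xs \in Var s :\: Var t by rewrite in_setD ntxs sxs.
have xt_ts : xt \in Var t :\: Var s by rewrite in_setD nsxt txt.
have [sg ?] := second_kind_at_min xs_st xt_ts Pxs_xt xs_min.
by exists sg; right.
Qed.

End Kinds.

Theorem lemma2 (n l : nat) (hn : 0 < n) (hnl : n <= l) (t s : term n)
  (ht : is_term t) (hs : is_term s)
  (hall : forall i : 'I_n, i \in Var t :|: Var s) :
  forall P : 'I_n -> 'I_l,
    V l [:: (t, s)] P <->
    exists sg : {perm 'I_n},
      (first_kind t s sg /\ Y1 l sg P) \/ (second_kind t s sg /\ Y2 l sg P).
Proof.
move=> P; split=> [/V_seq1 | [sg [[kind Y] | [kind Y]]]].
- exact: solution_sorting_perm.
- exact/V_seq1/(first_kind_solution kind Y).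
- exact/V_seq1/(second_kind_solution kind Y).
Qed.
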